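(* Let $K^{(1)},K^{(2)}$ be independent fractal percolations on $[0,1]$ with the same parameters $M\in\mathbb{N}_{\geq2}$ and $p\in[0,1]$. Then for any $n\in\mathbb{N}_0$, $$\mathbb{E}N(K_n^{(1)}\cap K_n^{(2)})=(Mp^2)^n\left(2-2M^{-n}-4p\frac{M-1}{M-p}\left[1-\left(\frac pM\right)^n\right]+2p^2\frac{M-1}{M-p^2}\left[1-\left(\frac{p^2}{M}\right)^n\right]\right).$$
   Context: Fractal percolation on $[0,1]$: $K_0=[0,1]$; given $K_{n-1}$, a union of closed grid intervals of length $M^{-(n-1)}$, each is divided into $M$ closed subintervals of length $M^{-n}$, each kept independently (of everything else) with probability $p$; $K_n$ is the union of kept subintervals. $N(A)$ denotes the number of isolated points of $A$. *)

From HB Require Import structures.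
From mathcomp Require Import all_boot all_order all_algebra.
From mathcomp Require Import all_classical all_reals all_analysis.
From mathcomp Require Import finmap.
Set Implicit Arguments. Unset Strict Implicit. Unset Printing Implicit Defensive.
Import Order.TTheory GRing.Theory Num.Theory.
Import numFieldNormedType.Exports.
Local Open Scope classical_set_scope.
Local Open Scope ring_scope.

(* Index set of all grid intervals at levels 1..n (level k.+1 has M^(k.+1)
   intervals, indexed by 'I_(M ^ k.+1)). *)
Definition gridIdx (M n : nat) : finType := {k : 'I_n & 'I_(M ^ k.+1)}.

(* A realisation of the keep/discard coins of fractal percolation up to level n. *)
Definition Coins (M n : nat) : finType := {ffun gridIdx M n -> bool}.

Definition weight (R : realType) (p : R) (M n : nat) (c : Coins M n) : R :=
  \prod_(x : gridIdx M n) (if c x then p else 1 - p).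

(* The level-n interval number j (j < M^n) belongs to K_n iff it and all its
   ancestors were kept; the ancestor at level k.+1 has index j %/ M^(n - k.+1). *)
Definition kept (M n : nat) (c : Coins M n) (j : nat) : bool :=
  [forall x : gridIdx M n,
     (val (tagged x) == j %/ M ^ (n - (tag x).+1))%N ==> c x].

Definition Kset (R : realType) (M n : nat) (c : Coins M n) : set R :=
  [set x : R | exists j : nat, [/\ (j < M ^ n)%N, kept c j &
      (j%:R / (M ^ n)%:R <= x <= j.+1%:R / (M ^ n)%:R)]].

(* N(A) : number of isolated points of A (0 if there are infinitely many). *)
Definition Niso (R : realType) (A : set R) : nat := #|` fset_set (isolated A)|%fset.

Definition expected_N (R : realType) (M : nat) (p : R) (n : nat) : R :=
  \sum_(c1 : Coins M n) \sum_(c2 : Coins M n)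
     weight p c1 * weight p c2 * (Niso (Kset (R:=R) c1 `&` Kset (R:=R) c2))%:R.

From mathcomp Require Import all_boot all_order all_algebra.
From mathcomp Require Import all_classical all_reals all_analysis.
From mathcomp Require Import finmap.
From mathcomp Require Import zify ring lra.
Set Implicit Arguments. Unset Strict Implicit. Unset Printing Implicit Defensive.
Import Order.TTheory GRing.Theory Num.Theory.
Import numFieldNormedType.Exports.

(* A point of K_n^(1) ∩ K_n^(2) inside a level-n cell kept by both percolations is not
   isolated, so the isolated points are exactly the grid points j / M^n, 0 < j < M^n, at
   which one percolation keeps cell j-1 but not cell j and the other keeps cell j but not
   cell j-1.  By independence such a point has probability 2 q_j^2, where
   q_j = p^n - P(cells j-1 and j both kept).  These two cells have different ancestors
   exactly at the levels l with M^(n-l) | j, so P(both kept) = p^n T(p, j) with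
   T(y, j) = y^#{such levels}.  As T(p, j)^2 = T(p^2, j), everything reduces to
   S_n(y) = Σ_{j < M^n} T(y, j); writing j = a M + r gives
   S_(n+1)(y) = y S_n(y) + (M - 1) M^n y, whence a closed form for S_n. *)

Lemma eq_divn_pred (d j : nat) : 0 < j -> (j.-1 %/ d == j %/ d) = ~~ (d %| j).
Proof.
move=> j_gt0; rewrite divn_pred; have [dj|_] := boolP (d %| j); last by rewrite subn0 eqxx.
have d_gt0 : 0 < d by case: d dj => // /[!dvd0n] /eqP j0; rewrite j0 in j_gt0.
have : 0 < j %/ d by rewrite divn_gt0 // dvdn_leq.
by case: (j %/ d) => // q _; rewrite subn1 ltn_eqF.
Qed.

Local Open Scope ring_scope.

Lemma natr_forall (R : comPzSemiRingType) (I : finType) (b : pred I) :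
  [forall i, b i]%:R = \prod_i (b i)%:R :> R.
Proof.
have [/forallP bT|/forallPn[i /negbTE bi]] := boolP [forall i, b i].
  by rewrite big1 // => i _; rewrite bT.
by rewrite (bigD1 i) //= bi mul0r.
Qed.

Lemma natr_andbN (R : pzRingType) (a b : bool) : (a && ~~ b)%:R = a%:R - (a && b)%:R :> R.
Proof. by case: a; case: b; rewrite /= ?subrr ?subr0. Qed.

Lemma prod_if_mem2 (R : comPzSemiRingType) (y : R) (m u v : nat) :
  (u < m)%N -> (v < m)%N ->
  \prod_(i < m) (if (val i == u) || (val i == v) then y else 1)
  = if u == v then y else y * y.
Proof.
move=> um vm; rewrite (bigD1 (Ordinal um)) ?eqxx //=.
have [<-|uv] := eqVneq u v.
  by rewrite big1 ?mulr1 // => i /negbTE; rewrite -val_eqE /= => ->.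
rewrite (bigD1 (Ordinal vm)) /=; last by rewrite -val_eqE /= eq_sym.
rewrite eqxx orbT big1 ?mulr1 // => i /andP[].
by rewrite -!val_eqE /= => /negbTE -> /negbTE ->.
Qed.

(* For [0 < j], [M ^ (n - k.+1) %| j] means that the cells [j.-1] and [j] of level [n]
   have different ancestors at level [k.+1]. *)
Definition sep_weight (R : pzSemiRingType) (M n : nat) (y : R) (j : nat) : R :=
  \prod_(k < n) (if (M ^ (n - k.+1) %| j)%N then y else 1).

Definition sep_weight_sum (R : pzSemiRingType) (M n : nat) (y : R) : R :=
  \sum_(0 <= j < M ^ n) sep_weight M n y j.

Section SepWeight.
Variables (R : comNzRingType) (M : nat) (y : R).

Lemma sep_weight0 n : sep_weight M n y 0 = y ^+ n.
Proof.
by rewrite /sep_weight (eq_bigr (fun=> y)) ?prodr_const ?card_ord // => k; rewrite dvdn0.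
Qed.

Lemma sep_weightS n j :
  sep_weight M n.+1 y j = y * \prod_(k < n) (if (M ^ (n - k) %| j)%N then y else 1).
Proof. by rewrite /sep_weight big_ord_recr /= subnn expn0 dvd1n mulrC. Qed.

Lemma sep_weightS_mul n a : (0 < M)%N -> sep_weight M n.+1 y (a * M) = y * sep_weight M n y a.
Proof.
move=> M_gt0; rewrite sep_weightS; congr (_ * _); apply: eq_bigr => k _.
by rewrite -subnSK // expnSr dvdn_pmul2r.
Qed.

Lemma sep_weightS_ndvd n j : ~~ (M %| j)%N -> sep_weight M n.+1 y j = y.
Proof.
move=> Mj; rewrite sep_weightS big1 ?mulr1 // => k _.
by rewrite -subnSK // expnS (negbTE (contra (dvdn_trans (dvdn_mulr _ (dvdnn M))) Mj)).
Qed.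

Lemma sep_weight_sumS n : (0 < M)%N ->
  sep_weight_sum M n.+1 y = y * sep_weight_sum M n y + (M ^ n)%:R * (M%:R - 1) * y.
Proof.
move=> M_gt0; rewrite /sep_weight_sum expnSr big_nat_mul mulr_sumr.
have -> : (M ^ n)%:R * (M%:R - 1) * y = \sum_(0 <= a < M ^ n) (M%:R - 1) * y.
  by rewrite sumr_const_nat subn0 -mulrA mulr_natl.
rewrite -big_split /=.
apply: eq_bigr => a _; rewrite big_ltn ?ltn_pmul2r // sep_weightS_mul //; congr (_ + _).
rewrite (eq_big_nat _ _ (F2 := fun=> y)) ?sumr_const_nat; last first.
  move=> j /andP[aj ja]; apply: sep_weightS_ndvd; apply/negP => /dvdnP[q jq].
  by rewrite jq ltn_mul2r in aj ja; nia.
have -> : (a.+1 * M - (a * M).+1 = M - 1)%N by rewrite mulSn; lia.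
by rewrite -[in LHS]mulr_natr natrB // mulrC.
Qed.

Lemma sep_weight_sum_closed n : (0 < M)%N ->
  (M%:R - y) * sep_weight_sum M n y = y * (M%:R - 1) * (M ^ n)%:R + M%:R * y ^+ n * (1 - y).
Proof.
move=> M_gt0; elim: n => [|n IH].
  by rewrite /sep_weight_sum expn0 big_nat1 sep_weight0 !expr0 !mulr1; ring.
by rewrite sep_weight_sumS // mulrDr mulrCA IH !natrX !exprS; ring.
Qed.

Lemma sep_weight_sqr n j : sep_weight M n y j ^+ 2 = sep_weight M n (y ^+ 2) j.
Proof. by rewrite /sep_weight -prodrXl; apply: eq_bigr => k _; case: ifP; rewrite ?expr1n. Qed.

End SepWeight.

Section Coins.
Variables (R : realType) (p : R) (M n : nat).
Hypothesis M_gt0 : (0 < M)%N.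

Lemma expect_all_kept (P : pred (gridIdx M n)) :
  \sum_(c : Coins M n) weight p c * [forall x, P x ==> c x]%:R
  = \prod_x (if P x then p else 1).
Proof.
transitivity (\sum_(c : Coins M n) \prod_x ((if c x then p else 1 - p) * (P x ==> c x)%:R)).
  by apply: eq_bigr => c _; rewrite /weight natr_forall -big_split.
(* Independence: the sum over configurations factors coin by coin. *)
rewrite -(bigA_distr_bigA (fun x b => (if b then p else 1 - p) * (P x ==> b)%:R)).
by apply: eq_bigr => x _; rewrite big_bool /=; case: (P x) => /=; ring.
Qed.

Definition ancestor (j : nat) (x : gridIdx M n) : bool :=
  val (tagged x) == (j %/ M ^ (n - (tag x).+1))%N.

Lemma prod_gridIdx (F : forall k : 'I_n, 'I_(M ^ k.+1) -> R) :
  \prod_(x : gridIdx M n) F (tag x) (tagged x) = \prod_(k < n) \prod_(i : 'I_(M ^ k.+1)) F k i.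
Proof. by rewrite (sig_big_dep xpredT (fun _ => xpredT) F). Qed.

Lemma ancestor_lt (j : nat) (k : 'I_n) : (j < M ^ n)%N -> (j %/ M ^ (n - k.+1) < M ^ k.+1)%N.
Proof. by move=> jn; rewrite ltn_divLR ?expn_gt0 ?M_gt0 // -expnD subnKC. Qed.

Lemma expect_kept2 (a b : nat) : (a < M ^ n)%N -> (b < M ^ n)%N ->
  \sum_(c : Coins M n) weight p c * (kept c a && kept c b)%:R
  = \prod_(k < n) (if (a %/ M ^ (n - k.+1) == b %/ M ^ (n - k.+1))%N then p else p * p).
Proof.
move=> an bn.
have keptI c : kept c a && kept c b = [forall x, (ancestor a x || ancestor b x) ==> c x].
  apply/andP/forallP => [[/forallP ka /forallP kb] x|kab].
    by apply/implyP => /orP[/(implyP (ka x))|/(implyP (kb x))].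
  split; apply/forallP => x; apply/implyP => ax.
    by apply: (implyP (kab x)); rewrite /ancestor ax.
  by apply: (implyP (kab x)); rewrite /ancestor ax orbT.
under eq_bigr => c _ do rewrite keptI.
rewrite expect_all_kept (prod_gridIdx (fun k i =>
  if (val i == a %/ M ^ (n - k.+1))%N || (val i == b %/ M ^ (n - k.+1))%N then p else 1)).
by apply: eq_bigr => k _; rewrite prod_if_mem2 ?ancestor_lt.
Qed.

Lemma expect_kept (j : nat) : (j < M ^ n)%N ->
  \sum_(c : Coins M n) weight p c * (kept c j)%:R = p ^+ n.
Proof.
move=> jn; have := expect_kept2 jn jn; under eq_bigr => c _ do rewrite andbb.
by move=> ->; rewrite (eq_bigr (fun=> p)) ?prodr_const ?card_ord // => k; rewrite eqxx.
Qed.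

Lemma expect_kept_adj (j : nat) : (0 < j)%N -> (j < M ^ n)%N ->
  \sum_(c : Coins M n) weight p c * (kept c j.-1 && kept c j)%:R = p ^+ n * sep_weight M n p j.
Proof.
move=> j_gt0 jn; rewrite expect_kept2 ?(leq_ltn_trans (leq_pred j)) //.
have -> : p ^+ n = \prod_(k < n) p by rewrite prodr_const card_ord.
rewrite -big_split /=.
apply: eq_bigr => k _; rewrite eq_divn_pred //.
by case: (M ^ (n - k.+1) %| j)%N; rewrite ?mulr1.
Qed.

Definition ends_at (c : Coins M n) (j : nat) : bool := kept c j.-1 && ~~ kept c j.
Definition starts_at (c : Coins M n) (j : nat) : bool := ~~ kept c j.-1 && kept c j.

Lemma expect_ends_at (j : nat) : (0 < j)%N -> (j < M ^ n)%N ->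
  \sum_(c : Coins M n) weight p c * (ends_at c j)%:R = p ^+ n - p ^+ n * sep_weight M n p j.
Proof.
move=> j_gt0 jn; under eq_bigr => c _ do rewrite natr_andbN mulrBr.
by rewrite sumrB expect_kept_adj // expect_kept // (leq_ltn_trans (leq_pred j)).
Qed.

Lemma expect_starts_at (j : nat) : (0 < j)%N -> (j < M ^ n)%N ->
  \sum_(c : Coins M n) weight p c * (starts_at c j)%:R = p ^+ n - p ^+ n * sep_weight M n p j.
Proof.
move=> j_gt0 jn; under eq_bigr => c _ do rewrite /starts_at andbC natr_andbN andbC mulrBr.
by rewrite sumrB expect_kept_adj // expect_kept.
Qed.

Lemma expect_indep (A B : Coins M n -> R) :
  \sum_(c1 : Coins M n) \sum_(c2 : Coins M n) weight p c1 * weight p c2 * (A c1 * B c2)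
  = (\sum_(c : Coins M n) weight p c * A c) * (\sum_(c : Coins M n) weight p c * B c).
Proof.
by rewrite big_distrlr; apply: eq_bigr => c1 _; apply: eq_bigr => c2 _; rewrite /= mulrACA.
Qed.

End Coins.

Local Open Scope classical_set_scope.

Lemma interval_not_isolated (R : realFieldType) (A : set R) (a b x : R) :
  a < b -> [set y | a <= y <= b] `<=` A -> a <= x <= b -> ~ isolated A x.
Proof.
move=> ab abA /andP[ax xb] [_ [V /nbhs_ballP[e /= e_gt0 eV] VA]].
pose d := Num.min (e / 2) ((b - a) / 2).
have d_gt0 : 0 < d by rewrite lt_min !divr_gt0 // subr_gt0.
have de : d <= e / 2 by rewrite ge_min lexx.
have dab : d <= (b - a) / 2 by rewrite ge_min lexx orbT.
pose y := if x + d <= b then x + d else x - d.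
have ya : a <= y <= b by rewrite /y; case: ifP => ?; apply/andP; split; lra.
have yx : y != x by rewrite /y; case: ifP => _; apply/eqP; lra.
have xey : ball x e y.
  by rewrite -ball_normE /= ltr_norml /y; case: ifP => _; apply/andP; split; lra.
have : (V `&` A) y by split; [exact: eV | exact: abA].
by rewrite VA => /= yx'; rewrite yx' eqxx in yx.
Qed.

Section Cells.
Variables (R : realFieldType) (D : R).
Hypothesis D_gt0 : 0 < D.

Lemma ler_cell (u v : nat) : (u%:R / D <= v%:R / D) = (u <= v)%N.
Proof. by rewrite ler_pM2r ?invr_gt0 // ler_nat. Qed.

Lemma ltr_cell (u v : nat) : (u%:R / D < v%:R / D) = (u < v)%N.
Proof. by rewrite ltr_pM2r ?invr_gt0 // ltr_nat. Qed.

Lemma cell_succ (j : nat) : j.+1%:R / D = j%:R / D + D^-1.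
Proof. by rewrite -natr1 mulrDl mul1r. Qed.

Definition in_cell (j : nat) (x : R) : bool := j%:R / D <= x <= j.+1%:R / D.

Lemma in_cell_l (j : nat) : in_cell j (j%:R / D).
Proof. by rewrite /in_cell lexx ler_cell leqnSn. Qed.

Lemma in_cell_r (j : nat) : in_cell j (j.+1%:R / D).
Proof. by rewrite /in_cell lexx ler_cell leqnSn. Qed.

Lemma in_cell_interior (i j : nat) (x : R) :
  in_cell i x -> j%:R / D < x < j.+1%:R / D -> i = j.
Proof.
move=> /andP[ix xi] /andP[jx xj].
have : (i < j.+1)%N by rewrite -ltr_cell (le_lt_trans ix xj).
have : (j < i.+1)%N by rewrite -ltr_cell (lt_le_trans jx xi).
lia.
Qed.

Lemma in_cell_adjacent (i j : nat) (x : R) : in_cell i x -> in_cell j x -> i <> j ->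
  (j = i.+1 /\ x = j%:R / D) \/ (i = j.+1 /\ x = i%:R / D).
Proof.
wlog ij : i j / (i < j)%N => [hwlog|] ix jx nij.
  by have [/hwlog|/hwlog|//] := ltngtP i j; [apply | move=> /(_ jx ix (nesym nij)); tauto].
move: ix jx => /andP[ix xi] /andP[jx xj].
have /eqP eji : j == i.+1 by rewrite eqn_leq ij andbT -ler_cell (le_trans jx xi).
by left; split => //; apply/le_anti; rewrite jx andbT eji.
Qed.

End Cells.

Lemma card_fset_set_inj_image (T : choiceType) (I : finType) (g : I -> T) (b : pred I) :
  injective g -> #|` fset_set (g @` [set i | b i])|%fset = #|b|.
Proof.
move=> g_inj; rewrite fset_set_image; last exact: finite_finset.
rewrite card_imfset // -card_finset; congr #|` _|%fset; apply/fsetP => i.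
rewrite in_fset_set; last exact: finite_finset.
by rewrite inE /=; apply/idP/idP; rewrite in_setE.
Qed.

Section Kset.
Variables (R : realType) (M n : nat).
Hypothesis M_gt0 : (0 < M)%N.

Let D : R := (M ^ n)%:R.
Let D_gt0 : 0 < D. Proof. by rewrite ltr0n expn_gt0 M_gt0. Qed.

Definition abut (c1 c2 : Coins M n) (j : nat) : bool := ends_at c1 j && starts_at c2 j.

Lemma natr_abut (c1 c2 : Coins M n) (j : nat) :
  (abut c1 c2 j || abut c2 c1 j)%:R
  = (ends_at c1 j)%:R * (starts_at c2 j)%:R + (starts_at c1 j)%:R * (ends_at c2 j)%:R :> R.
Proof.
rewrite /abut /ends_at /starts_at.
by case: (kept c1 j.-1); case: (kept c1 j); case: (kept c2 j.-1); case: (kept c2 j);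
  rewrite /= ?mulr0 ?mulr1 ?addr0 ?add0r.
Qed.

Lemma kept_both_not_isolated (c1 c2 : Coins M n) (i : nat) (x : R) :
  (i < M ^ n)%N -> kept c1 i -> kept c2 i -> in_cell D i x ->
  ~ isolated (Kset c1 `&` Kset c2) x.
Proof.
move=> iN k1 k2; apply: interval_not_isolated; first by rewrite ltr_cell.
by move=> y yi; split; exists i.
Qed.

Lemma abut_of_isolated (c1 c2 : Coins M n) (i : nat) :
  (i.+1 < M ^ n)%N -> kept c1 i -> kept c2 i.+1 ->
  isolated (Kset c1 `&` Kset c2) (i.+1%:R / D) -> abut c1 c2 i.+1.
Proof.
move=> iN k1 k2 iso; rewrite /abut /ends_at /starts_at /= k1 k2 andbT /=.
apply/andP; split; apply/negP => k.
  exact: (kept_both_not_isolated iN k k2 (in_cell_l D_gt0 _) iso).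
exact: (kept_both_not_isolated (ltnW iN) k1 k (in_cell_r D_gt0 _) iso).
Qed.

Lemma isolated_Kset_abut (c1 c2 : Coins M n) (x : R) :
  isolated (Kset c1 `&` Kset c2) x ->
  exists2 j : 'I_(M ^ n), (0 < j)%N && (abut c1 c2 j || abut c2 c1 j) & x = j%:R / D.
Proof.
move=> iso; have [[a [aN ka xa]] [b [bN kb xb]]] := isolatedS iso.
have [eab|nab] := eqVneq a b.
  by rewrite -eab in kb; case: (kept_both_not_isolated aN ka kb xa iso).
have [[eb ex]|[ea ex]] := in_cell_adjacent D_gt0 xa xb (elimN eqP nab).
  exists (Ordinal bN) => //=; rewrite eb /=; subst b x.
  by rewrite (abut_of_isolated bN ka kb iso).
exists (Ordinal aN) => //=; rewrite ea /=; subst a x; rewrite setIC in iso.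
by rewrite (abut_of_isolated aN kb ka iso) orbT.
Qed.

Lemma isolated_Kset_of_abut (c1 c2 : Coins M n) (j : nat) :
  (0 < j)%N -> (j < M ^ n)%N -> abut c1 c2 j -> isolated (Kset c1 `&` Kset c2) (j%:R / D).
Proof.
case: j => // i _ jN /andP[/andP[k1 nk1] /andP[nk2 k2]] /=.
have x_in : (Kset c1 `&` Kset c2) (i.+1%:R / D).
  split; [exists i | exists i.+1]; split => //;
    [exact: ltnW | exact: (in_cell_r D_gt0) | exact: (in_cell_l D_gt0)].
split; first exact: mem_set.
exists (ball (i.+1%:R / D) D^-1).
  by apply/nbhs_ballP; exists D^-1 => //=; rewrite invr_gt0.
apply/seteqP; split => y /=; last by move=> ->; split => //; apply: ballxx; rewrite invr_gt0.
move=> [+ [[i1 [_ ki1 yi1]] [i2 [_ ki2 yi2]]]].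
rewrite -ball_normE /= ltr_norml => /andP[yl yr].
have [yx|yx|//] := ltgtP y (i.+1%:R / D); rewrite cell_succ in yl yr yx.
- have ei2 : i2 = i.
    by apply: (in_cell_interior D_gt0 yi2); rewrite cell_succ; apply/andP; split; lra.
  by move: nk2; rewrite /= -ei2 ki2.
- have ei1 : i1 = i.+1.
    by apply: (in_cell_interior D_gt0 yi1); rewrite !cell_succ; apply/andP; split; lra.
  by rewrite -ei1 ki1 in nk1.
Qed.

Lemma Niso_Kset (c1 c2 : Coins M n) :
  Niso (Kset (R:=R) c1 `&` Kset c2) = (\sum_(1 <= j < M ^ n) (abut c1 c2 j || abut c2 c1 j))%N.
Proof.
pose b := [pred j : 'I_(M ^ n) | (0 < j)%N && (abut c1 c2 j || abut c2 c1 j)].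
pose g (j : 'I_(M ^ n)) : R := (val j)%:R / D.
rewrite /Niso; have -> : isolated (Kset c1 `&` Kset c2) = g @` [set j | b j].
  apply/seteqP; split => [x /isolated_Kset_abut[j bj ->]|_ [j /andP[j0 /orP[bj|bj]] <-]].
  - by exists j.
  - exact: isolated_Kset_of_abut j0 (ltn_ord j) bj.
  - by rewrite setIC; exact: isolated_Kset_of_abut j0 (ltn_ord j) bj.
rewrite card_fset_set_inj_image; last first.
  move=> i j /(mulIf (invr_neq0 (lt0r_neq0 D_gt0))) /eqP.
  by rewrite eqr_nat => /eqP /val_inj.
rewrite (@big_nat_widenl _ _ _ 1 0) // big_mkcond big_mkord -sum1_card big_mkcond /=.
by apply: eq_bigr => j _; rewrite inE; case: (0 < j)%N; case: (_ || _).
Qed.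

End Kset.

Lemma expected_N_sum (R : realType) (M : nat) (p : R) (n : nat) : (0 < M)%N ->
  expected_N M p n = \sum_(1 <= j < M ^ n) 2 * (p ^+ n - p ^+ n * sep_weight M n p j) ^+ 2.
Proof.
move=> M_gt0; rewrite /expected_N.
under eq_bigr => c1 _ do under eq_bigr => c2 _ do rewrite Niso_Kset // natr_sum mulr_sumr.
under eq_bigr => c1 _ do rewrite exchange_big /=.
rewrite exchange_big /=; apply: eq_big_nat => j /andP[j_gt0 jn].
under eq_bigr => c1 _ do under eq_bigr => c2 _ do rewrite natr_abut mulrDr.
under eq_bigr => c1 _ do rewrite big_split /=.
by rewrite big_split /= !expect_indep expect_ends_at // expect_starts_at //; ring.
Qed.

Lemma sum_sqr_end_prob (R : comNzRingType) (M n : nat) (p : R) : (0 < M)%N ->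
  \sum_(1 <= j < M ^ n) 2 * (p ^+ n - p ^+ n * sep_weight M n p j) ^+ 2 =
  2 * p ^+ n ^+ 2 * ((M ^ n)%:R - 1 - 2 * (sep_weight_sum M n p - p ^+ n)
                     + (sep_weight_sum M n (p ^+ 2) - p ^+ 2 ^+ n)).
Proof.
move=> M_gt0.
have sum_from1 (y : R) :
    \sum_(1 <= j < M ^ n) sep_weight M n y j = sep_weight_sum M n y - y ^+ n.
  by rewrite /sep_weight_sum [in RHS]big_ltn ?expn_gt0 ?M_gt0 // sep_weight0 addrAC subrr add0r.
transitivity (\sum_(1 <= j < M ^ n) 2 * p ^+ n ^+ 2 *
    (1 - 2 * sep_weight M n p j + sep_weight M n (p ^+ 2) j)).
  by apply: eq_bigr => j _; rewrite -sep_weight_sqr; ring.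
rewrite -mulr_sumr big_split sumrB /= -mulr_sumr !sum_from1 sumr_const_nat.
by rewrite natrB ?expn_gt0 ?M_gt0.
Qed.

Lemma sum_sqr_end_prob_closed (R : realFieldType) (M : nat) (p : R) (n : nat) :
  (2 <= M)%N -> 0 <= p <= 1 ->
  \sum_(1 <= j < M ^ n) 2 * (p ^+ n - p ^+ n * sep_weight M n p j) ^+ 2 =
  (M%:R * p ^+ 2) ^+ n *
  (2 - 2 * (M%:R ^- n)
   - 4 * p * ((M%:R - 1) / (M%:R - p)) * (1 - (p / M%:R) ^+ n)
   + 2 * p ^+ 2 * ((M%:R - 1) / (M%:R - p ^+ 2)) * (1 - (p ^+ 2 / M%:R) ^+ n)).
Proof.
move=> M_ge2 /andP[p_ge0 p_le1]; have M_gt0 : (0 < M)%N by apply: ltn_trans M_ge2.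
have M_ge2r : (2 : R) <= M%:R by rewrite (ler_nat R 2 M).
have Mp : M%:R - p != 0 by apply: lt0r_neq0; lra.
have p2_le1 : p ^+ 2 <= 1 by rewrite expr_le1.
have Mp2 : M%:R - p ^+ 2 != 0 by apply: lt0r_neq0; lra.
have Mn : M%:R ^+ n != 0 :> R by rewrite expf_neq0 // pnatr_eq0 -lt0n.
have sep_weight_sumE (y : R) : M%:R - y != 0 -> sep_weight_sum M n y =
    (y * (M%:R - 1) * (M ^ n)%:R + M%:R * y ^+ n * (1 - y)) / (M%:R - y).
  by move=> My; apply: (mulfI My); rewrite sep_weight_sum_closed // [RHS]mulrC divfK.
rewrite sum_sqr_end_prob // !sep_weight_sumE // !natrX !expr_div_n.
rewrite [(M%:R * _) ^+ n]exprMn !(exprAC p 2 n).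
move: (p ^+ n) (M%:R ^+ n) Mn => P Q Q_neq0.
by field; rewrite Mp Mp2 Q_neq0.
Qed.

Theorem proposition5p7 (R : realType) (M : nat) (p : R) (n : nat) :
  (2 <= M)%N -> 0 <= p <= 1 ->
  expected_N M p n =
  (M%:R * p ^+ 2) ^+ n *
  (2 - 2 * (M%:R ^- n)
   - 4 * p * ((M%:R - 1) / (M%:R - p)) * (1 - (p / M%:R) ^+ n)
   + 2 * p ^+ 2 * ((M%:R - 1) / (M%:R - p ^+ 2)) * (1 - (p ^+ 2 / M%:R) ^+ n)).
Proof.
move=> M_ge2 p01.
by rewrite expected_N_sum ?sum_sqr_end_prob_closed // (ltn_trans _ M_ge2).
Qed.
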